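(* Let $p,q\in\mathbb{N}$ be co-prime. Then the directed graph (finite state automaton) $(G,E)_{p/q}$ is strongly connected, i.e. for every pair of vertices $a,b\in G$ there is a directed path in $E$ from $a$ to $b$.
   Context: Let $D=\{0,1,p/q\}$. The automaton $(G,E)_{p/q}$ has vertex set $G=\{-q+1,-q+2,\dots,-1,0,1,\dots,q-1\}$ and (directed) edge set $E=\{(a,b)\in G\times G:\ \exists\,x,y\in D \text{ with } 2a+(x-y)q=b\}$, the edge $(a,b)$ going from $a$ to $b$. *)

From mathcomp Require Import all_boot all_order all_algebra.
From Stdlib Require Import Relations.
Set Implicit Arguments. Unset Strict Implicit. Unset Printing Implicit Defensive.
Import Order.TTheory GRing.Theory Num.Theory.
Local Open Scope ring_scope.

Definition digitD (p q : nat) (x : rat) : Prop :=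
  x = 0 \/ x = 1 \/ x = (p%:Q / q%:Q).

Definition vertG (q : nat) (a : int) : Prop :=
  - (q%:Z) + 1 <= a /\ a <= (q%:Z) - 1.

Definition edgeE (p q : nat) (a b : int) : Prop :=
  vertG q a /\ vertG q b /\
  exists x y : rat, digitD p q x /\ digitD p q y /\
    2%:Q * a%:~R + (x - y) * q%:Q = b%:~R.

Definition dpath (p q : nat) (a b : int) : Prop :=
  clos_refl_trans_1n int (edgeE p q) a b.

(** Choosing the digits x in {0, p/q} and y in {0, 1} gives the edges
    m -> 2m + e p - f q with e, f in {0, 1}.  Iterating n of them from c reaches
    2^n c + a p - b q for any a, b < 2^n (read off their binary digits), and no
    intermediate vertex leaves G: the vertex before 2m + e p - f q is recovered
    by halving, which maps G into itself because p < q.  As p is invertible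
    modulo q, every b in G is a p - k q with 0 <= a < q and k >= 0, giving a
    path from 0 to b; solving 2^n a + a' p - k q = 0 in the same way for a
    large n gives a path from a >= 0 to 0, and the symmetry v -> -v of the
    automaton (swap x and y) handles a < 0. *)
From mathcomp Require Import all_boot all_order all_algebra zify ring.
From Stdlib Require Import Relations.
Set Implicit Arguments. Unset Strict Implicit. Unset Printing Implicit Defensive.
Import Order.TTheory GRing.Theory Num.Theory.
Local Open Scope ring_scope.

Lemma dpath_trans (p q : nat) (a b c : int) :
  dpath p q a b -> dpath p q b c -> dpath p q a c.
Proof.
move=> hab hbc; apply: clos_rt_rt1n.
exact: rt_trans (clos_rt1n_rt _ _ _ _ hab) (clos_rt1n_rt _ _ _ _ hbc).
Qed.

Lemma dpath_cons (p q : nat) (a b c : int) :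
  edgeE p q a b -> dpath p q b c -> dpath p q a c.
Proof. exact: Relation_Operators.rt1n_trans. Qed.

Lemma dpath_rcons (p q : nat) (a b c : int) :
  dpath p q a b -> edgeE p q b c -> dpath p q a c.
Proof. by move=> hab hbc; apply: dpath_trans hab (dpath_cons hbc (rt1n_refl _ _ _)). Qed.

Lemma edgeE_opp (p q : nat) (a b : int) : edgeE p q a b -> edgeE p q (- a) (- b).
Proof.
move=> [ha [hb [x [y [hx [hy def_b]]]]]].
do 2 (split; first by move: ha hb; rewrite /vertG; lia).
by exists y, x; do 2 (split => //); rewrite !intrN -def_b; ring.
Qed.

Lemma dpath_opp (p q : nat) (a b : int) : dpath p q a b -> dpath p q (- a) (- b).
Proof.
elim=> [c | c d e hcd _ IH]; first exact: rt1n_refl.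
exact: dpath_cons (edgeE_opp hcd) IH.
Qed.

Lemma edgeE_digits (p q : nat) (e f : bool) (m : int) :
  vertG q m -> vertG q (2 * m + e%:Z * p%:Z - f%:Z * q%:Z) ->
  edgeE p q m (2 * m + e%:Z * p%:Z - f%:Z * q%:Z).
Proof.
move=> hm hc; do 2 (split => //); clear hc.
have q_neq0 : q%:Q != 0 by rewrite pnatr_eq0; move: hm; rewrite /vertG; lia.
exists (if e then p%:Q / q%:Q else 0), (if f then 1 else 0).
do 2 (split; first by case: ifP; rewrite /digitD; auto).
by case: e; case: f => /=; field.
Qed.

Lemma vertG_halve (p q : nat) (e f : bool) (m : int) : (p < q)%N ->
  vertG q (2 * m + e%:Z * p%:Z - f%:Z * q%:Z) -> vertG q m.
Proof. by rewrite /vertG; case: e; case: f => /=; lia. Qed.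

Lemma dpath_binary (p q n a b : nat) (c : int) : (p < q)%N ->
  (a < 2 ^ n)%N -> (b < 2 ^ n)%N ->
  vertG q ((2 ^ n)%:Z * c + a%:Z * p%:Z - b%:Z * q%:Z) ->
  dpath p q c ((2 ^ n)%:Z * c + a%:Z * p%:Z - b%:Z * q%:Z).
Proof.
move=> hpq; elim: n a b => [|n IH] a b ha hb.
  have [-> ->] : a = 0%N /\ b = 0%N by rewrite expn0 in ha hb; lia.
  by rewrite mul1r !mul0r subr0 addr0 => _; apply: rt1n_refl.
set m := (2 ^ n)%:Z * c + (a./2)%:Z * p%:Z - (b./2)%:Z * q%:Z.
have -> : (2 ^ n.+1)%:Z * c + a%:Z * p%:Z - b%:Z * q%:Z
          = 2 * m + (odd a)%:Z * p%:Z - (odd b)%:Z * q%:Z.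
  by rewrite /m expnS; lia.
move=> hd; have hm := vertG_halve hpq hd.
apply: dpath_rcons (edgeE_digits hm hd).
by apply: IH => //; rewrite expnS in ha hb; lia.
Qed.

Lemma coprime_residue (p q : nat) : coprime p q -> (0 < q)%N ->
  forall c : int, exists (a : nat) (k : int), (a < q)%N /\ c = a%:Z * p%:Z - k * q%:Z.
Proof.
move=> hcop q_gt0 c.
have /coprimezP [[u v] /= bezout] : coprimez p q by rewrite coprimezE.
have q_neq0 : q%:Z != 0 by lia.
set r := ((c * u) %% q)%Z; set k := ((c * u) %/ q)%Z.
have r_ge0 : 0 <= r by apply: modz_ge0.
have r_lt : r < q%:Z by have := ltz_mod (c * u) q_neq0; lia.
have def_cu : c * u = k * q%:Z + r by apply: divz_eq.
exists (absz r), (- (k * p%:Z + c * v)); split; first lia.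
rewrite gez0_abs // -[c in LHS]mulr1 -bezout -[r](addKr (k * q%:Z)) -def_cu.
ring.
Qed.

Lemma dpath_from0 (p q : nat) : coprime p q -> (p < q)%N ->
  forall b : int, vertG q b -> dpath p q 0 b.
Proof.
move=> hcop hpq b hb.
have [a [k [a_lt def_b]]] := coprime_residue hcop (leq_ltn_trans (leq0n p) hpq) b.
have k_ge0 : 0 <= k by move: hb; rewrite /vertG; nia.
have := ltn_expl (a + `|k|) (isT : (1 < 2)%N).
have := @dpath_binary p q (a + `|k|) a `|k| 0 hpq.
rewrite mulr0 add0r gez0_abs // -def_b => hpath hlt.
by apply: hpath => //; lia.
Qed.

Lemma dpath_to0 (p q : nat) : coprime p q -> (p < q)%N ->
  forall a : int, vertG q a -> 0 <= a -> dpath p q a 0.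
Proof.
move=> hcop hpq a ha a_ge0.
pose n := (q * p.+1)%N; pose N := (2 ^ n)%N.
have n_lt : (n < N)%N by apply: ltn_expl.
have [r [k [r_lt def_c]]] :=
  coprime_residue hcop (leq_ltn_trans (leq0n p) hpq) (- (N%:Z * a)).
have def_kq : k * q%:Z = N%:Z * a + r%:Z * p%:Z by lia.
have k_ge0 : 0 <= k by nia.
have k_lt : k < N%:Z.
  have : r%:Z * p%:Z < N%:Z by nia.
  have : N%:Z * a <= N%:Z * (q%:Z - 1) by apply: ler_wpM2l; move: ha; rewrite /vertG; lia.
  nia.
have := @dpath_binary p q n r `|k| a hpq.
have -> : N%:Z * a + r%:Z * p%:Z - `|k|%N%:Z * q%:Z = 0 by rewrite gez0_abs //; lia.
by apply; [lia | lia | rewrite /vertG; lia].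
Qed.

Theorem theorem5p2 (p q : nat) (hcop : coprime p q) (hpq : (p < q)%N) :
  forall a b : int, vertG q a -> vertG q b -> dpath p q a b.
Proof.
move=> a b ha hb; apply: dpath_trans (dpath_from0 hcop hpq hb).
have [a_ge0 | a_lt0] := lerP 0 a; first exact: dpath_to0.
rewrite -(opprK a) -oppr0; apply/dpath_opp/dpath_to0 => //; last lia.
by move: ha; rewrite /vertG; lia.
Qed.
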